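(* Assume the setup and monomial order in the context, with $b_{v;j,i}=\sum_{s=1}^n v_{j,r(s)}v^\dagger_{s,r(i)}-\delta_{j,i}1$. Every overlap ambiguity $(g_1,g_2,b_1,b_2)$ of $R$ with respect to $\le$ (i.e. $g_1,g_2\in R$ nonzero, $b_1,b_2$ monomials with $(b_1,b_2)\ne(1,1)$, $\mathrm{tip}(g_1)\,b_2=b_1\,\mathrm{tip}(g_2)$, $\mathrm{tip}(g_2)$ does not divide $b_2$ and $\mathrm{tip}(g_1)$ does not divide $b_1$) is of the form $$(b_{v^\dagger;\ell,1},\ b_{v;1,i},\ v^\dagger_{\ell,n},\ v^\dagger_{1,r(i)})$$ for some $v\in M$ and $(\ell,i)\in[n]^2$. Moreover every overlap ambiguity resolves, i.e. there are reductions $\varphi_1,\varphi_2$ by $R$ with $\varphi_1((\mathrm{tip}(g_1)-g_1/\lambda_1)b_2)=\varphi_2(b_1(\mathrm{tip}(g_2)-g_2/\lambda_2))$, $\lambda_m$ the coefficient of $\mathrm{tip}(g_m)$ in $g_m$.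
   Context: Let $k$ be a field and $n\ge 2$ an integer; write $[n]=\{1,\dots,n\}$ and $r(i)=n+1-i$. Let $X=\{u_{j,i},u^*_{j,i}:(j,i)\in[n]^2\}$ be a set of $2n^2$ distinct symbols and let $*$ be the involution of $X$ exchanging $u_{j,i}$ and $u^*_{j,i}$. Let $k\langle X\rangle$ be the free unital $k$-algebra on $X$. For an $n\times n$ matrix $v=(v_{j,i})$ with entries in $X$ define $n\times n$ matrices $v^t,v^\star,v^\dagger$ with entries in $X$ by $v^t_{j,i}=v_{i,j}$, $v^\star_{j,i}=(v_{r(j),r(i)})^*$, $v^\dagger_{j,i}=(v_{r(i),r(j)})^*$. Let $u=(u_{j,i})$ and $M=\{u,u^t,u^\star,u^\dagger\}$, and $R=\{\sum_{s=1}^n v_{j,r(s)}v^\dagger_{s,r(i)}-\delta_{j,i}1: v\in M,(j,i)\in[n]^2\}$. Monomial order: let $\le$ be the total order on $X$ with $u^*_{t,s}<u_{j,i}$ for all indices, $u_{t,s}<u_{j,i}$ iff $(t,s)<(j,i)$ lexicographically, and $u^*_{t,s}<u^*_{j,i}$ iff $(j,i)<(t,s)$ lexicographically; extend degree-lexicographically to monomials. $\mathrm{tip}(p)$ is the $\le$-largest monomial with nonzero coefficient in $p\ne0$. A one-step reduction by $0\ne p$ is a linear endomorphism of $k\langle X\rangle$ which, for some fixed monomials $a,c$, sends $a\,\mathrm{tip}(p)\,c$ to $a(\mathrm{tip}(p)-p/\lambda_p)c$ ($\lambda_p$ the coefficient of $\mathrm{tip}(p)$ in $p$) and fixes all other monomials;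 a reduction by $R$ is a finite composite of one-step reductions by nonzero elements of $R$. *)

From HB Require Import structures.
From mathcomp Require Import all_boot all_algebra.
From mathcomp.multinomials Require Import monalg.

Set Implicit Arguments.
Unset Strict Implicit.
Unset Printing Implicit Defensive.

Import GRing.Theory.
Local Open Scope ring_scope.

(* Symbols: (false, j, i) is u_{j,i}, (true, j, i) is u^*_{j,i}.
   Indices are 0-based ordinals of 'I_n: ordinal j stands for j+1 in [n]. *)
Definition sym (n : nat) := (bool * 'I_n * 'I_n)%type.

Section Setup.
Variable n : nat.
Local Notation X := (sym n).

Definition u_ (j i : 'I_n) : X := (false, j, i).
Definition ustar_ (j i : 'I_n) : X := (true, j, i).

Definition inv (x : X) : X := (~~ x.1.1, x.1.2, x.2).

(* r(i) = n+1-i, i.e. rev_ord on 0-based indices *)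
Definition r (i : 'I_n) : 'I_n := rev_ord i.

Definition mat := 'I_n -> 'I_n -> X.

Definition mat_u : mat := fun j i => u_ j i.
Definition mat_t (v : mat) : mat := fun j i => v i j.
Definition mat_star (v : mat) : mat := fun j i => inv (v (r j) (r i)).
Definition mat_dag (v : mat) : mat := fun j i => inv (v (r i) (r j)).

Definition inM (v : mat) : Prop :=
  v = mat_u \/ v = mat_t mat_u \/ v = mat_star mat_u \/ v = mat_dag mat_u.

Definition lex_lt (a b : 'I_n * 'I_n) : bool :=
  (a.1 < b.1)%N || ((a.1 == b.1) && (a.2 < b.2)%N).

Definition ltX (x y : X) : bool :=
  match x.1.1, y.1.1 with
  | true, false => true
  | false, false => lex_lt (x.1.2, x.2) (y.1.2, y.2)
  | true, true => lex_lt (y.1.2, y.2) (x.1.2, x.2)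
  | false, true => false
  end.

Fixpoint lex_words (w1 w2 : seq X) : bool :=
  match w1, w2 with
  | x :: w1', y :: w2' => ltX x y || ((x == y) && lex_words w1' w2')
  | _, _ => false
  end.

Definition ltW (m1 m2 : {fmonom X}) : bool :=
  (size (val m1) < size (val m2))%N
  || ((size (val m1) == size (val m2)) && lex_words (val m1) (val m2)).

Definition leW (m1 m2 : {fmonom X}) : bool := (m1 == m2) || ltW m1 m2.

End Setup.

Section Algebra.
Variables (k : fieldType) (n : nat).
Local Notation X := (sym n).

Definition kX := {malg k[{fmonom X}]}.

Definition mono (m : {fmonom X}) : kX := << m >>.
Definition letter (x : X) : kX := mono (FMonom [:: x]).

Definition mmulW (m1 m2 : {fmonom X}) : {fmonom X} := FMonom (val m1 ++ val m2).
Definition mone : {fmonom X} := FMonom [::].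

Definition mdvd (t b : {fmonom X}) : Prop :=
  exists x y, b = mmulW (mmulW x t) y.

(* tip p: the <=-largest monomial with nonzero coefficient (p != 0) *)
Definition tip (p : kX) : {fmonom X} :=
  let s : seq {fmonom X} := finmap.enum_fset (msupp p) in
  foldr (fun m acc => if ltW acc m then m else acc) (head mone s) s.

Definition lc (p : kX) : k := p@_(tip p).

Definition bgen (v : mat n) (j i : 'I_n) : kX :=
  \sum_(s < n) letter (v j (r s)) * letter (mat_dag v s (r i)) - (j == i)%:R.

Definition inR (g : kX) : Prop :=
  exists v, inM v /\ exists j i, g = bgen v j i.

(* one-step reduction by p with fixed monomials a, c:
   a tip(p) c |-> a (tip(p) - p / lambda_p) c, all other monomials fixed,
   extended linearly *)
Definition red1 (p : kX) (a c : {fmonom X}) (q : kX) : kX :=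
  let w := mmulW (mmulW a (tip p)) c in
  q - q@_w *: mono w
    + q@_w *: (mono a * (mono (tip p) - (lc p)^-1 *: p) * mono c).

Definition reduction (phi : kX -> kX) : Prop :=
  exists s : seq (kX * {fmonom X} * {fmonom X}),
    (forall t, t \in s -> inR t.1.1 /\ t.1.1 != 0) /\
    phi =1 foldr (fun t f => red1 t.1.1 t.1.2 t.2 \o f) id s.

Definition overlap (g1 g2 : kX) (b1 b2 : {fmonom X}) : Prop :=
  inR g1 /\ inR g2 /\ g1 != 0 /\ g2 != 0 /\
  (b1, b2) != (mone, mone) /\
  mmulW (tip g1) b2 = mmulW b1 (tip g2) /\
  ~ mdvd (tip g2) b2 /\ ~ mdvd (tip g1) b1.

Definition resolves (g1 g2 : kX) (b1 b2 : {fmonom X}) : Prop :=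
  exists phi1 phi2, reduction phi1 /\ reduction phi2 /\
    phi1 ((mono (tip g1) - (lc g1)^-1 *: g1) * mono b2)
    = phi2 (mono b1 * (mono (tip g2) - (lc g2)^-1 *: g2)).

End Algebra.

(* The tip of b_{v;j,i} is v_{j,n} v^dag_{1,r(i)}, with coefficient 1, since for
   v in M the letter v_{j,n} is the largest of its row.  Two tips of length two
   overlap in a single letter, and w^dag_{1,r(i)} = v_{j,n} with v, w in M forces
   i = j = 1 and w = v^dag.  The ambiguity then resolves because
     sum_s v^dag_{l,r(s)} b_{v;s,i} = sum_t b_{v^dag;l,t} v^dag_{t,r(i)}:
   reducing each half of the S-polynomial by the n-1 summands not involved in the
   overlap turns both halves into the same element. *)

From Pilot Require Import Defs.
From HB Require Import structures.
From mathcomp Require Import all_boot all_algebra.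
From mathcomp Require Import finmap.
From mathcomp.multinomials Require Import monalg.
From mathcomp Require Import zify.
From Stdlib Require Import FunctionalExtensionality.

Set Implicit Arguments.
Unset Strict Implicit.
Unset Printing Implicit Defensive.

Import GRing.Theory.
Local Open Scope ring_scope.

Section MonomialOrder.
Variable n : nat.
Local Notation X := (sym n).

Lemma lex_lt_irr (a : 'I_n * 'I_n) : lex_lt a a = false.
Proof. by case: a => a b; rewrite /lex_lt /= -!val_eqE /=; lia. Qed.

Lemma lex_lt_trans (a b c : 'I_n * 'I_n) : lex_lt a b -> lex_lt b c -> lex_lt a c.
Proof. by case: a b c => [a1 a2] [b1 b2] [c1 c2]; rewrite /lex_lt /= -!val_eqE /=; lia. Qed.

Lemma lex_lt_total (a b : 'I_n * 'I_n) : a != b -> lex_lt a b || lex_lt b a.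
Proof. by case: a b => [a1 a2] [b1 b2]; rewrite /lex_lt /= xpair_eqE -!val_eqE /=; lia. Qed.

Lemma ltX_irr (x : X) : ltX x x = false.
Proof. by case: x => [[[] j] i]; rewrite /ltX /= lex_lt_irr. Qed.

Lemma ltX_trans (x y z : X) : ltX x y -> ltX y z -> ltX x z.
Proof.
case: x y z => [[[] ? ?]] [[[] ? ?]] [[[] ? ?]]; rewrite /ltX //= => lt_xy lt_yz;
  first [exact: lex_lt_trans lt_xy lt_yz | exact: lex_lt_trans lt_yz lt_xy].
Qed.

Lemma ltX_total (x y : X) : x != y -> ltX x y || ltX y x.
Proof.
case: x y => [[[] j i]] [[[] j' i']]; rewrite /ltX /= ?orbT // => neq_xy;
  [rewrite orbC|]; apply: lex_lt_total; apply: contra neq_xy => /eqP [-> ->] //.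
Qed.

Lemma lex_words_irr (w : seq X) : lex_words w w = false.
Proof. by elim: w => //= x w ->; rewrite ltX_irr eqxx. Qed.

Lemma lex_words_trans (a b c : seq X) :
  lex_words a b -> lex_words b c -> lex_words a c.
Proof.
elim: a b c => [|x a IHa] [|y b] [|z c] //=.
case/orP=> [lt_xy|/andP[/eqP <- lt_ab]]; case/orP=> [lt_yz|/andP[/eqP <- lt_bc]].
- by rewrite (ltX_trans lt_xy lt_yz).
- by rewrite lt_xy.
- by rewrite lt_yz.
- by rewrite eqxx (IHa _ _ lt_ab lt_bc) orbT.
Qed.

Lemma lex_words_total (a b : seq X) :
  size a = size b -> a != b -> lex_words a b || lex_words b a.
Proof.
elim: a b => [|x a IHa] [|y b] //= [] eq_size neq_ab.
have [eq_xy|neq_xy] := eqVneq x y; last by case/orP: (ltX_total neq_xy) => ->; rewrite ?orbT.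
subst y; rewrite !ltX_irr /=; apply: IHa => //; apply: contra neq_ab => /eqP -> //.
Qed.

Lemma ltW_irr (m : {fmonom X}) : ltW m m = false.
Proof. by rewrite /ltW ltnn eqxx lex_words_irr. Qed.

Lemma ltW_trans (a b c : {fmonom X}) : ltW a b -> ltW b c -> ltW a c.
Proof.
rewrite /ltW; case/orP=> [lt_ab|/andP[/eqP eq_ab lt_ab]].
  by case/orP=> [/(ltn_trans lt_ab)->|/andP[/eqP <- _]]; rewrite ?lt_ab.
case/orP=> [lt_bc|/andP[/eqP eq_bc lt_bc]]; first by rewrite eq_ab lt_bc.
by rewrite eq_ab eq_bc eqxx (lex_words_trans lt_ab lt_bc) orbT.
Qed.

Lemma ltW_total (a b : {fmonom X}) : a != b -> ltW a b || ltW b a.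
Proof.
rewrite /ltW => neq_ab; case: (ltngtP (size (val a)) (size (val b))) => [//|_|eq_size].
  by rewrite orbT.
by rewrite /= lex_words_total // (contra _ neq_ab) // => /eqP/val_inj->.
Qed.

Lemma leW_trans (a b c : {fmonom X}) : leW a b -> leW b c -> leW a c.
Proof.
rewrite /leW; case/orP=> [/eqP -> //|lt_ab]; case/orP=> [/eqP <-|lt_bc].
  by rewrite lt_ab orbT.
by rewrite (ltW_trans lt_ab lt_bc) orbT.
Qed.

Lemma leW_anti (a b : {fmonom X}) : leW a b -> leW b a -> a = b.
Proof.
rewrite /leW; case/orP=> [/eqP //|lt_ab]; case/orP=> [/eqP //|lt_ba].
by have := ltW_trans lt_ab lt_ba; rewrite ltW_irr.
Qed.

Definition maxW (m acc : {fmonom X}) := if ltW acc m then m else acc.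

Lemma foldr_maxW_mem (m0 : {fmonom X}) s : foldr maxW m0 s \in m0 :: s.
Proof.
elim: s => [|m s IHs] /=; first exact: mem_head.
rewrite /maxW; case: ifP => _; first by rewrite !inE eqxx orbT.
by move: IHs; rewrite !inE => /orP[->|->]; rewrite ?orbT.
Qed.

Lemma foldr_maxW_ge (m0 : {fmonom X}) s m : m \in s -> leW m (foldr maxW m0 s).
Proof.
elim: s => [|m' s IHs] //=; rewrite inE /maxW; set F := foldr _ _ _.
case: ifP => lt_Fm'.
  case/orP=> [/eqP ->|/IHs le_mF]; first by rewrite /leW eqxx.
  by apply: leW_trans le_mF _; rewrite /leW lt_Fm' orbT.
case/orP=> [/eqP ->|]; last exact: IHs.
have [->|neq] := eqVneq m' F; first by rewrite /leW eqxx.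
by move: (ltW_total neq); rewrite lt_Fm' orbF /leW => ->; rewrite orbT.
Qed.

End MonomialOrder.

Section FreeAlgebra.
Variables (k : fieldType) (n : nat).
Local Notation X := (sym n).
Local Notation kX := (kX k n).

Lemma tip_max (p : kX) m : m \in msupp p ->
  (forall m', m' \in msupp p -> leW m' m) -> tip p = m.
Proof.
move=> supp_m m_max; rewrite /tip.
set s := enum_fset _; change (foldr (@maxW n) (head (Defs.mone n) s) s = m).
have s_m : m \in s by [].
set F := foldr _ _ _; have s_F : F \in s.
  have := foldr_maxW_mem (head (Defs.mone n) s) s; rewrite -/F inE => /orP[/eqP ->|//].
  by case: s s_m {F} => [|x s'] //= _; rewrite inE eqxx.
by apply: leW_anti; [exact: m_max | exact: foldr_maxW_ge].
Qed.

Lemma monoM (a b : {fmonom X}) : mono k a * mono k b = mono k (mmulW a b).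
Proof.
rewrite /mono malgM_def fgmulUU mulr1; congr << _ >>.
by apply/val_inj; rewrite /= fmM.
Qed.

Lemma mono_mone : mono k (Defs.mone n) = 1.
Proof. by rewrite /mono; congr << _ >>; apply/val_inj; rewrite /= fm1. Qed.

Lemma mulr_mone (p : kX) : p * mono k (Defs.mone n) = p.
Proof. by rewrite mono_mone mulr1. Qed.

Lemma mul_mone (p : kX) : mono k (Defs.mone n) * p = p.
Proof. by rewrite mono_mone mul1r. Qed.

Lemma mcoeff_mono (m m' : {fmonom X}) : (mono k m)@_m' = (m == m')%:R.
Proof. exact: mcoeffU1. Qed.

Lemma mono_letter2 (x y : X) : letter k x * letter k y = mono k (FMonom [:: x; y]).
Proof. by rewrite /letter monoM. Qed.

Lemma mono_letter3 (x y z : X) :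
  letter k x * letter k y * letter k z = mono k (FMonom [:: x; y; z]).
Proof. by rewrite mono_letter2 /letter monoM. Qed.

End FreeAlgebra.

Section SumIndicator.
Variables (I : finType) (R : nzSemiRingType).

Lemma sum_eq_inj (T : eqType) (F : I -> T) (t : I) :
  (forall s, (F s == F t) = (s == t)) -> \sum_s ((F s == F t)%:R : R) = 1.
Proof.
move=> F_inj; rewrite (bigD1 t) //= eqxx big1 ?addr0 // => s neq_st.
by rewrite F_inj (negbTE neq_st).
Qed.

Lemma sum_eq_none (T : eqType) (F : I -> T) (x : T) :
  (forall s, F s != x) -> \sum_s ((F s == x)%:R : R) = 0.
Proof. by move=> F_x; rewrite big1 // => s _; rewrite (negbTE (F_x s)). Qed.

End SumIndicator.

Lemma sum_mulrn_eq (I : finType) (V : nmodType) (F : I -> V) (i : I) :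
  \sum_s F s *+ (s == i) = F i.
Proof. by rewrite (bigD1 i) //= eqxx big1 ?addr0 // => s /negbTE->. Qed.

Lemma addr_subr_perm (V : zmodType) (a t g b b' c c' : V) :
  a = t - g -> b' = b -> c' = c -> a + (c' - b') = t - g - b + c.
Proof. by move=> -> -> ->; rewrite addrA addrAC. Qed.

Lemma addr_subrAC (V : zmodType) (t t' a b c c' : V) :
  t = t' -> c = c' -> t - a - b + c = t' - b - a + c'.
Proof. by move=> -> ->; congr (_ + _); exact: addrAC. Qed.

Lemma sum_filter_neq (I : finType) (V : zmodType) (F : I -> V) (z : I) :
  \sum_(s <- [seq s <- index_enum I | s != z]) F s = \sum_s F s - F z.
Proof. by rewrite big_filter [in RHS](bigD1 z) //= addrC addrK. Qed.

Section Matrices.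
Variable n : nat.

Lemma rK : involutive (@r n).
Proof. exact: rev_ordK. Qed.

Lemma mat_ext (v w : mat n) : (forall j i, v j i = w j i) -> v = w.
Proof.
by move=> eq_vw; apply: functional_extensionality => j; apply: functional_extensionality.
Qed.

Lemma mat_dagK (v : mat n) : mat_dag (mat_dag v) = v.
Proof. by apply: mat_ext => j i; rewrite /mat_dag /inv !rK /=; case: (v j i) => [[[] ? ?]]. Qed.

Lemma inM_dag (v : mat n) : inM v -> inM (mat_dag v).
Proof.
case=> [->|[->|[->|->]]]; rewrite /inM ?mat_dagK;
  [do 3 right | do 2 right; left | right; left | by left];
  by apply: mat_ext => j i; rewrite /mat_dag /mat_star /mat_t /inv /= ?rK;
    case: (mat_u _ _) => [[[] ? ?]].
Qed.

Lemma inM_row_inj (v : mat n) j : inM v -> injective (v j).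
Proof.
move=> Mv a b; case: Mv => [->|[->|[->|->]]];
  rewrite /mat_t /mat_star /mat_dag /mat_u /u_ /inv /= => eq_ab; injection eq_ab => *;
  first [assumption | apply: val_inj; move: (ltn_ord a) (ltn_ord b) => /=; lia].
Qed.

Lemma inM_row_eq (v : mat n) j a b : inM v -> (v j (r a) == v j (r b)) = (a == b).
Proof. by move=> Mv; rewrite (inj_eq (@inM_row_inj v j Mv)) (inj_eq rev_ord_inj). Qed.

Variable z : 'I_n.
Hypothesis z0 : val z = 0%N.

(* [z] is the first index, so [r z] is the last column. *)
Lemma inM_row_max (v : mat n) j s : inM v -> s != z -> ltX (v j (r s)) (v j (r z)).
Proof.
rewrite -val_eqE z0 /= => Mv s_ne_z.
case: Mv => [->|[->|[->|->]]];
  rewrite /mat_t /mat_star /mat_dag /mat_u /u_ /inv /ltX /lex_lt /= -!val_eqE /=;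
  rewrite ?rK /= z0; move: (ltn_ord s) (ltn_ord j); lia.
Qed.

Lemma inM_tips_overlap (v w : mat n) i j : (1 < n)%N -> inM v -> inM w ->
  mat_dag w z (r i) = v j (r z) -> [/\ i = z, j = z & w = mat_dag v].
Proof.
move=> n_gt1 Mv Mw; move: (ltn_ord i) (ltn_ord j) => lt_i lt_j.
case: Mv => [->|[->|[->|->]]]; case: Mw => [->|[->|[->|->]]];
  rewrite /mat_t /mat_star /mat_dag /mat_u /u_ /inv /= ?rK => /eqP;
  rewrite !xpair_eqE -!val_eqE /= ?z0 => eq_ij; try (exfalso; lia).
all: split; try (apply: val_inj; rewrite z0 /=; lia).
all: by apply: mat_ext => a b; rewrite ?rK.
Qed.

End Matrices.

Section Generators.
Variables (k : fieldType) (n : nat).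
Local Notation X := (sym n).

Definition bword (v : mat n) (j i s : 'I_n) : {fmonom X} :=
  FMonom [:: v j (r s); mat_dag v s (r i)].

Lemma mcoeff_bgen (v : mat n) j i m : (bgen k v j i)@_m =
  \sum_s (bword v j i s == m)%:R - ((j == i) && (m == FMonom [::]))%:R.
Proof.
rewrite /bgen mcoeffB raddf_sum mcoeffMn mcoeff1; congr (_ - _).
  by apply: eq_bigr => s _; rewrite mono_letter2; exact: mcoeff_mono.
have -> : (m == mone) = (m == FMonom [::]) by rewrite !fmP fm1.
by case: (j == i).
Qed.

Lemma bword_eq (v : mat n) j i s t : inM v -> (bword v j i s == bword v j i t) = (s == t).
Proof.
move=> Mv; apply/idP/eqP => [|-> //].
by rewrite fmP eqseq_cons inM_row_eq // => /andP[/eqP].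
Qed.

Lemma mcoeff_bgen_bword (v : mat n) j i s : inM v -> (bgen k v j i)@_(bword v j i s) = 1.
Proof.
move=> Mv; rewrite mcoeff_bgen sum_eq_inj => [|t]; last exact: bword_eq.
by rewrite fmP andbF subr0.
Qed.

Lemma msupp_bgen (v : mat n) j i m : m \in msupp (bgen k v j i) ->
  m = FMonom [::] \/ exists s, m = bword v j i s.
Proof.
rewrite -mcoeff_neq0 mcoeff_bgen.
have [-> _|m_ne1] := eqVneq m (FMonom [::]); first by left.
have [s /eqP <-|no_s] := pickP (fun s => bword v j i s == m); first by right; exists s.
by rewrite sum_eq_none ?andbF ?subr0 ?eqxx // => s; rewrite no_s.
Qed.

Variable z : 'I_n.
Hypothesis z0 : val z = 0%N.

Lemma tip_bgen (v : mat n) j i : inM v -> tip (bgen k v j i) = bword v j i z.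
Proof.
move=> Mv; apply: tip_max => [|m /msupp_bgen [->|[s ->]]].
- by rewrite -mcoeff_neq0 mcoeff_bgen_bword ?oner_eq0.
- by rewrite /leW /ltW orbC.
- rewrite /leW; have [-> |s_ne0] := eqVneq s z; first by rewrite eqxx.
  by rewrite /ltW /= (inM_row_max z0 _ Mv) // orbT.
Qed.

Lemma lc_bgen (v : mat n) j i : inM v -> lc (bgen k v j i) = 1.
Proof. by move=> Mv; rewrite /lc tip_bgen // mcoeff_bgen_bword. Qed.

Lemma scale_lc_bgen (v : mat n) j i :
  inM v -> (lc (bgen k v j i))^-1 *: bgen k v j i = bgen k v j i.
Proof. by move=> Mv; rewrite lc_bgen // invr1 scale1r. Qed.

Lemma bgen_neq0 (v : mat n) j i : inM v -> bgen k v j i != 0.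
Proof.
move=> Mv; apply: contra_eq_neq (lc_bgen j i Mv) => ->.
by rewrite /lc mcoeff0 eq_sym oner_neq0.
Qed.

End Generators.

Section OverlapShape.
Variable n : nat.
Local Notation X := (sym n).

Lemma two_letter_overlap (x1 y1 x2 y2 : X) (b1 b2 : {fmonom X}) :
  mmulW (FMonom [:: x1; y1]) b2 = mmulW b1 (FMonom [:: x2; y2]) ->
  (b1, b2) != (Defs.mone n, Defs.mone n) -> ~ mdvd (FMonom [:: x1; y1]) b1 ->
  [/\ b1 = FMonom [:: x1], y1 = x2 & b2 = FMonom [:: y2]].
Proof.
case: b1 b2 => [s1] [s2] /(congr1 val) /= eq_words ne_one no_dvd.
case: s1 eq_words ne_one no_dvd => [|a [|b s1]] /= eq_words ne_one no_dvd.
- by case: eq_words => _ _ eq_s2; move: ne_one; rewrite eq_s2 /Defs.mone eqxx.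
- by case: eq_words => -> -> ->.
- exfalso; apply: no_dvd; exists (Defs.mone n), (FMonom s1).
  by case: eq_words => -> -> _; apply: val_inj.
Qed.

Variables (k : fieldType) (z : 'I_n).
Hypothesis z0 : val z = 0%N.

Lemma overlap_shape (g1 g2 : kX k n) b1 b2 : (1 < n)%N -> overlap g1 g2 b1 b2 ->
  exists v l i, [/\ inM v, g1 = bgen k (mat_dag v) l z, g2 = bgen k v z i,
    b1 = FMonom [:: mat_dag v l (r z)] & b2 = FMonom [:: mat_dag v z (r i)]].
Proof.
move=> n_gt1 [[w [Mw [j1 [i1 ->]]]] [[v [Mv [j2 [i2 ->]]]]]].
move=> [_ [_ [ne_one [eq_tips [_ no_dvd]]]]].
rewrite !(tip_bgen k z0) // /bword in eq_tips no_dvd.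
case: (two_letter_overlap eq_tips ne_one no_dvd) => -> eq_letter ->.
case: (inM_tips_overlap z0 n_gt1 Mv Mw eq_letter) => -> -> ->.
by exists v, j1, i2.
Qed.

End OverlapShape.

Section Reductions.
Variables (k : fieldType) (n : nat).
Local Notation X := (sym n).
Local Notation kX := (kX k n).

Definition reduce_seq (s : seq (kX * {fmonom X} * {fmonom X})) : kX -> kX :=
  foldr (fun t f => red1 t.1.1 t.1.2 t.2 \o f) id s.

Lemma reduce_seq_reduction s :
  (forall t, t \in s -> inR t.1.1 /\ t.1.1 != 0) -> reduction (reduce_seq s).
Proof. by move=> s_R; exists s. Qed.

Definition red_word (p : kX) (a c : {fmonom X}) := mmulW (mmulW a (tip p)) c.

Lemma red1E (p : kX) a c q : lc p = 1 ->
  red1 p a c q = q - q@_(red_word p a c) *: (mono k a * p * mono k c).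
Proof.
move=> lc1; rewrite /red1 lc1 invr1 scale1r -/(red_word p a c) -!monoM.
by rewrite mulrBr mulrBl scalerBr addrA subrK.
Qed.

(* Each one-step reduction cancels the coefficient -1 of its own word, and no
   other reduction of the family touches that word. *)
Lemma reduce_seq_sum (I : eqType) (L : seq I) (P : I -> kX) (A C : I -> {fmonom X})
    (Q : kX) : uniq L ->
  {in L, forall s, lc (P s) = 1} ->
  {in L, forall s, Q@_(red_word (P s) (A s) (C s)) = -1} ->
  {in L &, forall s t, s != t ->
     (mono k (A t) * P t * mono k (C t))@_(red_word (P s) (A s) (C s)) = 0} ->
  reduce_seq [seq (P s, A s, C s) | s <- L] Q
  = Q + \sum_(s <- L) mono k (A s) * P s * mono k (C s).
Proof.
elim: L => [|s L IHL] /=; first by rewrite big_nil addr0.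
case/andP=> s_notin_L uniq_L lc1 coefQ coef0.
have sub_sL t : t \in L -> t \in s :: L by move=> t_L; rewrite inE t_L orbT.
rewrite /reduce_seq /= -/(reduce_seq _) IHL //; first last.
- by move=> t u /sub_sL t_L /sub_sL u_L; apply: coef0.
- by move=> t /sub_sL; apply: coefQ.
- by move=> t /sub_sL; apply: lc1.
have coef_L :
    (\sum_(t <- L) mono k (A t) * P t * mono k (C t))@_(red_word (P s) (A s) (C s)) = 0.
  rewrite raddf_sum big_seq big1 // => t t_L; apply: coef0; rewrite ?mem_head ?sub_sL //.
  by apply: contraNneq s_notin_L => ->.
rewrite red1E ?lc1 ?mem_head // mcoeffD coefQ ?mem_head // coef_L addr0 scaleN1r opprK.
by rewrite big_cons addrA addrAC.
Qed.

End Reductions.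

Section Expansions.
Variables (k : fieldType) (n : nat).
Local Notation X := (sym n).

Lemma letter_bgen (a : X) (v : mat n) j i : letter k a * bgen k v j i =
  \sum_t mono k (FMonom [:: a; v j (r t); mat_dag v t (r i)]) - letter k a *+ (j == i).
Proof.
rewrite /bgen mulrBr mulr_sumr; congr (_ - _); last exact: mulr_natr.
by apply: eq_bigr => t _; rewrite mulrA mono_letter3.
Qed.

Lemma bgen_letter (c : X) (v : mat n) j i : bgen k v j i * letter k c =
  \sum_t mono k (FMonom [:: v j (r t); mat_dag v t (r i); c]) - letter k c *+ (j == i).
Proof.
rewrite /bgen mulrBl mulr_suml; congr (_ - _); last exact: mulr_natl.
by apply: eq_bigr => t _; rewrite mono_letter3.
Qed.

Lemma mcoeff_sum_word3 (F : 'I_n -> seq X) (c : X) (b : bool) (m : {fmonom X}) :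
  size (val m) = 3 ->
  (\sum_t mono k (FMonom (F t)) - letter k c *+ b)@_m = \sum_t (FMonom (F t) == m)%:R.
Proof.
move=> size_m; rewrite mcoeffB raddf_sum mcoeffMn.
have -> : (letter k c)@_m = 0.
  by rewrite mcoeff_mono; case: eqP => // eq_m; rewrite -eq_m in size_m.
by rewrite mul0rn subr0; apply: eq_bigr => t _; exact: mcoeff_mono.
Qed.

(* Both sides equal the sum over s, t of v^dag_{l,r(s)} v_{s,r(t)} v^dag_{t,r(i)}
   minus v^dag_{l,r(i)}. *)
Lemma sum_letter_bgen (v : mat n) l i :
  \sum_s letter k (mat_dag v l (r s)) * bgen k v s i
  = \sum_t bgen k (mat_dag v) l t * letter k (mat_dag v t (r i)).
Proof.
transitivity (\sum_s (\sum_t mono k (FMonom [:: mat_dag v l (r s); v s (r t); mat_dag v t (r i)])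
  - letter k (mat_dag v l (r s)) *+ (s == i))).
  by apply: eq_bigr => s _; exact: letter_bgen.
transitivity (\sum_t (\sum_s mono k (FMonom [:: mat_dag v l (r s); v s (r t); mat_dag v t (r i)])
  - letter k (mat_dag v t (r i)) *+ (t == l))).
  rewrite [LHS]sumrB [RHS]sumrB [X in X - _ = _]exchange_big.
  by rewrite [X in _ - X = _]sum_mulrn_eq [X in _ = _ - X]sum_mulrn_eq.
by apply: eq_bigr => t _; rewrite bgen_letter mat_dagK eq_sym.
Qed.

End Expansions.

Section Resolution.
Variables (k : fieldType) (n : nat) (z : 'I_n).
Hypothesis z0 : val z = 0%N.
Variables (v : mat n) (l i : 'I_n).
Hypothesis Mv : inM v.
Local Notation g1 := (bgen k (mat_dag v) l z).
Local Notation g2 := (bgen k v z i).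
Local Notation x1 := (mat_dag v l (r z)).
Local Notation x2 := (mat_dag v z (r i)).

Let Mdv : inM (mat_dag v) := inM_dag Mv.

Lemma red_word_left s :
  red_word (bgen k v s i) (FMonom [:: mat_dag v l (r s)]) (Defs.mone n)
  = FMonom [:: mat_dag v l (r s); v s (r z); x2].
Proof. by rewrite /red_word (tip_bgen k z0) //; apply: val_inj. Qed.

Lemma red_word_right t :
  red_word (bgen k (mat_dag v) l t) (Defs.mone n) (FMonom [:: mat_dag v t (r i)])
  = FMonom [:: x1; v z (r t); mat_dag v t (r i)].
Proof. by rewrite /red_word (tip_bgen k z0) //; apply: val_inj; rewrite /= mat_dagK. Qed.

Lemma mcoeff_left_spoly s : s != z ->
  ((mono k (bword (mat_dag v) l z z) - g1) * letter k x2)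
    @_(FMonom [:: mat_dag v l (r s); v s (r z); x2]) = -1.
Proof.
move=> s_ne_z; rewrite mulrBl mcoeffB monoM mcoeff_mono.
rewrite fmP /= eqseq_cons inM_row_eq // eq_sym (negbTE s_ne_z) sub0r.
rewrite bgen_letter mcoeff_sum_word3 // mat_dagK; congr (- _).
apply: sum_eq_inj => t.
by rewrite fmP /= eqseq_cons inM_row_eq //; case: eqP => [->|]; rewrite ?eqxx.
Qed.

Lemma mcoeff_left_other s t : s != t ->
  (mono k (FMonom [:: mat_dag v l (r t)]) * bgen k v t i * mono k (Defs.mone n))
    @_(FMonom [:: mat_dag v l (r s); v s (r z); x2]) = 0.
Proof.
move=> s_ne_t; rewrite mulr_mone letter_bgen mcoeff_sum_word3 //.
by apply: big1 => u _; rewrite fmP /= eqseq_cons inM_row_eq // eq_sym (negbTE s_ne_t).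
Qed.

Lemma mcoeff_right_spoly t : t != z ->
  (letter k x1 * (mono k (bword v z i z) - g2))
    @_(FMonom [:: x1; v z (r t); mat_dag v t (r i)]) = -1.
Proof.
move=> t_ne_z; rewrite mulrBr mcoeffB monoM mcoeff_mono.
rewrite fmP /= !eqseq_cons eqxx inM_row_eq // eq_sym (negbTE t_ne_z) sub0r.
rewrite letter_bgen mcoeff_sum_word3 //; congr (- _).
apply: sum_eq_inj => u.
by rewrite fmP /= !eqseq_cons eqxx inM_row_eq //; case: eqP => [->|]; rewrite ?eqxx.
Qed.

Lemma mcoeff_right_other s t : s != t ->
  (mono k (Defs.mone n) * bgen k (mat_dag v) l t * mono k (FMonom [:: mat_dag v t (r i)]))
    @_(FMonom [:: x1; v z (r s); mat_dag v s (r i)]) = 0.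
Proof.
move=> s_ne_t; rewrite mul_mone bgen_letter mcoeff_sum_word3 // mat_dagK.
apply: big1 => u _; rewrite fmP /= eqseq_cons inM_row_eq //.
by case: eqP => [->|] //=; rewrite eqseq_cons inM_row_eq // eq_sym (negbTE s_ne_t).
Qed.

Let L := [seq s <- index_enum 'I_n | s != z].
Let left_family := [seq (bgen k v s i, FMonom [:: mat_dag v l (r s)], Defs.mone n) | s <- L].
Let right_family :=
  [seq (bgen k (mat_dag v) l t, Defs.mone n, FMonom [:: mat_dag v t (r i)]) | t <- L].

Let uniq_L : uniq L.
Proof. by rewrite filter_uniq // index_enum_uniq. Qed.

Let mem_L s : (s \in L) = (s != z).
Proof. by rewrite mem_filter mem_index_enum andbT. Qed.

Lemma reduce_left_spoly :
  reduce_seq left_family ((mono k (bword (mat_dag v) l z z) - g1) * letter k x2)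
  = mono k (bword (mat_dag v) l z z) * letter k x2 - g1 * letter k x2 - letter k x1 * g2
    + \sum_s letter k (mat_dag v l (r s)) * bgen k v s i.
Proof.
rewrite (@reduce_seq_sum k n _ L (fun s => bgen k v s i)
  (fun s => FMonom [:: mat_dag v l (r s)]) (fun=> Defs.mone n) _ uniq_L); first last.
- by move=> s t _ _ s_ne_t; rewrite red_word_left mcoeff_left_other.
- by move=> s; rewrite mem_L => s_ne_z; rewrite red_word_left mcoeff_left_spoly.
- by move=> s _; rewrite (lc_bgen k z0).
rewrite sum_filter_neq; apply: addr_subr_perm; first exact: mulrBl.
  exact: mulr_mone.
by apply: eq_bigr => s _; exact: mulr_mone.
Qed.

Lemma reduce_right_spoly :
  reduce_seq right_family (letter k x1 * (mono k (bword v z i z) - g2))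
  = letter k x1 * mono k (bword v z i z) - letter k x1 * g2 - g1 * letter k x2
    + \sum_t bgen k (mat_dag v) l t * letter k (mat_dag v t (r i)).
Proof.
rewrite (@reduce_seq_sum k n _ L (fun t => bgen k (mat_dag v) l t)
  (fun=> Defs.mone n) (fun t => FMonom [:: mat_dag v t (r i)]) _ uniq_L); first last.
- by move=> s t _ _ s_ne_t; rewrite red_word_right mcoeff_right_other.
- by move=> t; rewrite mem_L => t_ne_z; rewrite red_word_right mcoeff_right_spoly.
- by move=> t _; rewrite (lc_bgen k z0).
rewrite sum_filter_neq; apply: addr_subr_perm; first exact: mulrBr.
  by congr (_ * _); exact: mul_mone.
by apply: eq_bigr => t _; congr (_ * _); exact: mul_mone.
Qed.

Lemma overlap_word :
  mono k (bword (mat_dag v) l z z) * letter k x2 = letter k x1 * mono k (bword v z i z).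
Proof.
by rewrite [LHS]monoM [RHS]monoM; congr (mono k _); apply: val_inj; rewrite /= mat_dagK.
Qed.

Lemma resolves_overlap : resolves g1 g2 (FMonom [:: x1]) (FMonom [:: x2]).
Proof.
exists (reduce_seq left_family), (reduce_seq right_family); split; [|split].
- apply: reduce_seq_reduction => _ /mapP[s _ ->]; split; last exact: (bgen_neq0 k z0).
  by exists v; split=> //; exists s, i.
- apply: reduce_seq_reduction => _ /mapP[t _ ->]; split; last exact: (bgen_neq0 k z0).
  by exists (mat_dag v); split=> //; exists l, t.
transitivity (reduce_seq left_family ((mono k (bword (mat_dag v) l z z) - g1) * letter k x2)).
  by rewrite (tip_bgen k z0 l z Mdv) (scale_lc_bgen k z0 l z Mdv).
transitivity (reduce_seq right_family (letter k x1 * (mono k (bword v z i z) - g2))); last first.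
  by rewrite (tip_bgen k z0 z i Mv) (scale_lc_bgen k z0 z i Mv).
rewrite reduce_left_spoly reduce_right_spoly.
by apply: addr_subrAC; [exact: overlap_word | exact: sum_letter_bgen].
Qed.

End Resolution.

Theorem lemma3p6 (k : fieldType) (n : nat) (hn : (2 <= n)%N)
    (g1 g2 : kX k n) (b1 b2 : {fmonom sym n}) :
  overlap g1 g2 b1 b2 ->
  (exists v : mat n, inM v /\
     exists (l i one : 'I_n), nat_of_ord one = 0%N /\
       g1 = bgen k (mat_dag v) l one /\
       g2 = bgen k v one i /\
       b1 = FMonom [:: mat_dag v l (r one)] /\
       b2 = FMonom [:: mat_dag v one (r i)])
  /\ resolves g1 g2 b1 b2.
Proof.
move=> ov; have n_gt0 : (0 < n)%N by apply: leq_trans hn.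
pose z := Ordinal n_gt0; have z0 : val z = 0%N by [].
have [v [l [i [Mv -> -> -> ->]]]] := overlap_shape z0 hn ov.
split; first by exists v; split=> //; exists l, i, z.
exact: (resolves_overlap k z0 l i Mv).
Qed.
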